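(* Consider the problem $\min_{x\in\mathbb{R}^n}\max_{y\in\Delta}F(x)^Ty$ and assume strict complementarity holds. For any $x^*$ for which some $y$ makes $(x^*,y)$ a stationary solution, there is exactly one $y\in\Delta$ such that $(x^*,y)$ is a stationary solution, and exactly one pair $(\mu,\nu)$ such that $(x^*,y,\mu,\nu)$ satisfies the KKT system.
   Context: $F(x)=(f_1(x),\dots,f_m(x))^T$ is a smooth map $\mathbb{R}^n\to\mathbb{R}^m$ and $\Delta$ the probability simplex in $\mathbb{R}^m$. KKT system for $(x^*,y,\mu,\nu)$: $\sum_iy_i\nabla f_i(x^* )=0$, $\sum_iy_i=1$, $y_i\ge0$, $\mu-\nu_i=f_i(x^* )$, $\nu_i\ge0$, $\nu_iy_i=0$ for all $i$; $(x^*,y)$ is a stationary solution if the KKT system has a solution $(\mu,\nu)$. Strict complementarity: for every solution of the KKT system, $\nu_i>0$ for all $i$ with $y_i=0$. *)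

From HB Require Import structures.
From mathcomp Require Import all_boot all_order all_algebra.
From mathcomp Require Import all_classical all_reals all_analysis.
Set Implicit Arguments. Unset Strict Implicit. Unset Printing Implicit Defensive.
Import Order.TTheory GRing.Theory Num.Theory.
Import numFieldNormedType.Exports.
Local Open Scope ring_scope.

Section Defs.
Variables (R : realType) (n m : nat).

Fixpoint Ck (k : nat) (f : 'rV[R]_n -> 'rV[R]_m) : Prop :=
  match k with
  | 0 => continuous f
  | k'.+1 => continuous f /\
      forall v : 'rV[R]_n, (forall x, derivable f x v) /\ Ck k' (fun x => 'D_v f x)
  end.

Definition smooth (F : 'rV[R]_n -> 'rV[R]_m) : Prop := forall k, Ck k F.

Definition comp (F : 'rV[R]_n -> 'rV[R]_m) (i : 'I_m) : 'rV[R]_n -> R :=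
  fun x => F x 0 i.

Definition grad (f : 'rV[R]_n -> R) (x : 'rV[R]_n) : 'rV[R]_n :=
  \row_(j < n) 'D_(delta_mx 0 j) f x.

Definition in_simplex (y : 'rV[R]_m) : Prop :=
  (forall i, 0 <= y 0 i) /\ \sum_(i < m) y 0 i = 1.

Definition KKT (F : 'rV[R]_n -> 'rV[R]_m) (x : 'rV[R]_n) (y : 'rV[R]_m)
  (mu : R) (nu : 'rV[R]_m) : Prop :=
  \sum_(i < m) y 0 i *: grad (comp F i) x = 0 /\
  \sum_(i < m) y 0 i = 1 /\
  (forall i, 0 <= y 0 i) /\
  (forall i, mu - nu 0 i = comp F i x) /\
  (forall i, 0 <= nu 0 i) /\
  (forall i, nu 0 i * y 0 i = 0).

Definition stationary (F : 'rV[R]_n -> 'rV[R]_m) (x : 'rV[R]_n) (y : 'rV[R]_m) : Prop :=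
  exists mu nu, KKT F x y mu nu.

Definition strict_complementarity (F : 'rV[R]_n -> 'rV[R]_m) : Prop :=
  forall x y mu nu, KKT F x y mu nu -> forall i, y 0 i = 0 -> 0 < nu 0 i.

End Defs.

From Pilot Require Import Defs.
From HB Require Import structures.
From mathcomp Require Import all_boot all_order all_algebra.
From mathcomp Require Import all_classical all_reals all_analysis.
Import Order.TTheory GRing.Theory Num.Theory.
Import numFieldNormedType.Exports.
Local Open Scope ring_scope.

(* Since [nu >= 0] and the probability vector [y] is supported where [nu = 0],
   every KKT solution has [mu = max_i f_i(x)] and [nu_i = mu - f_i(x)], so the
   multipliers [(mu, nu)] depend on [x] only.  For fixed [(mu, nu)] the KKT
   conditions on [y] are affine, so if [y <> y'] both solve them, one can move
   from [y] towards [y'] (and beyond) until a positive coordinate [y_i] vanishes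
   while the point stays nonnegative: this yields a KKT solution with
   [y_i = 0 = nu_i], contradicting strict complementarity. *)

Lemma min_ratio_test {R : realFieldType} {I : finType} {y y' : I -> R} :
  (forall i, 0 <= y i) -> (forall i, 0 <= y' i) ->
  \sum_i y i = \sum_i y' i -> (exists i, y' i != y i) ->
  exists t : R, (forall j, 0 <= y j + t * (y' j - y j)) /\
    exists2 i, 0 < y i & y i + t * (y' i - y i) = 0.
Proof.
move=> y_ge0 y'_ge0 sum_eq [k y'k_neq].
have [i0 lt_i0] : exists i, y' i < y i.
  apply/existsP; apply: contraT; rewrite negb_exists => /forallP /= le_yy'.
  have le_d j : 0 <= y' j - y j by rewrite subr_ge0 leNgt le_yy'.
  have sum_d0 : \sum_j (y' j - y j) = 0 by rewrite sumrB sum_eq subrr.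
  by move: y'k_neq; rewrite -subr_eq0 (psumr_eq0P (fun j _ => le_d j) sum_d0 (i := k)) ?eqxx.
pose ratio j := y j / (y j - y' j).
have [i lt_i min_i] := @arg_minP _ R I i0 (fun j => y' j < y j) ratio lt_i0.
have d_gt0 j : y' j < y j -> 0 < y j - y' j by rewrite subr_gt0.
have yi_gt0 : 0 < y i by apply: le_lt_trans lt_i.
exists (ratio i); split; last first.
  exists i => //.
  by rewrite -opprB mulrN divfK ?gt_eqF ?d_gt0 // subrr.
move=> j; have [lt_j | le_j] := ltP (y' j) (y j).
- rewrite -opprB mulrN subr_ge0 -ler_pdivlMr ?d_gt0 //.
  exact: min_i.
- have ratio_ge0 : 0 <= ratio i by rewrite divr_ge0 ?ltW ?d_gt0.
  by rewrite addr_ge0 // mulr_ge0 // subr_ge0.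
Qed.

Section KKT.
Variables (R : realType) (n m : nat) (F : 'rV[R]_n -> 'rV[R]_m) (x : 'rV[R]_n).

Lemma KKT_in_simplex {y mu nu} : KKT F x y mu nu -> in_simplex y.
Proof. by case=> _ [sum1 [y_ge0 _]]. Qed.

Lemma KKT_comp_le_mu {y mu nu} i : KKT F x y mu nu -> Defs.comp F i x <= mu.
Proof. by case=> _ [_ [_ [fE [nu_ge0 _]]]]; rewrite -fE gerBl. Qed.

Lemma KKT_nu_eq0 {y mu nu} i : KKT F x y mu nu -> 0 < y 0 i -> nu 0 i = 0.
Proof.
case=> _ [_ [_ [_ [_ compl]]]] yi_gt0.
by have /eqP := compl i; rewrite mulf_eq0 (gt_eqF yi_gt0) orbF => /eqP.
Qed.

Lemma KKT_mu_eq_comp {y mu nu} : KKT F x y mu nu -> exists i, mu = Defs.comp F i x.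
Proof.
move=> K; have [_ [sum1 [y_ge0 [fE _]]]] := K.
have /hasP [i _ yi_gt0] : has (fun i => true && (0 < y 0 i)) (index_enum 'I_m).
  by rewrite -psumr_neq0 // sum1 oner_neq0.
by exists i; rewrite -fE (KKT_nu_eq0 i K yi_gt0) subr0.
Qed.

Lemma KKT_mu_unique {y mu nu y' mu' nu'} :
  KKT F x y mu nu -> KKT F x y' mu' nu' -> mu = mu'.
Proof.
move=> K K'; have [i mu_eq] := KKT_mu_eq_comp K; have [i' mu'_eq] := KKT_mu_eq_comp K'.
apply/le_anti; rewrite {1}mu_eq (KKT_comp_le_mu i K') mu'_eq.
exact: KKT_comp_le_mu K.
Qed.

Lemma KKT_nuE {y mu nu} : KKT F x y mu nu -> nu = \row_i (mu - Defs.comp F i x).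
Proof. by case=> _ [_ [_ [fE _]]]; apply/rowP => i; rewrite mxE -fE subKr. Qed.

Lemma KKT_multipliers_unique {y mu nu y' mu' nu'} :
  KKT F x y mu nu -> KKT F x y' mu' nu' -> (mu, nu) = (mu', nu').
Proof. by move=> K K'; rewrite (KKT_nuE K) (KKT_nuE K') (KKT_mu_unique K K'). Qed.

Lemma KKT_line {y y' mu nu} (t : R) :
  KKT F x y mu nu -> KKT F x y' mu nu ->
  (forall j, 0 <= y 0 j + t * (y' 0 j - y 0 j)) ->
  KKT F x (y + t *: (y' - y)) mu nu.
Proof.
move=> [grad0 [sum1 [_ [fE [nu_ge0 compl]]]]] [grad0' [sum1' [_ [_ [_ compl']]]]] z_ge0.
have zE j : (y + t *: (y' - y)) 0 j = y 0 j + t * (y' 0 j - y 0 j) by rewrite !mxE.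
split; last split; last split; last split; last split.
- under eq_bigr => j _ do rewrite zE scalerDl -scalerA scalerBl.
  by rewrite big_split /= -scaler_sumr sumrB grad0 grad0' subrr scaler0 addr0.
- by under eq_bigr => j _ do rewrite zE; rewrite big_split /= -mulr_sumr sumrB sum1 sum1' subrr mulr0 addr0.
- by move=> j; rewrite zE.
- exact: fE.
- exact: nu_ge0.
- by move=> j; rewrite zE mulrDr mulrCA mulrBr compl compl' subrr mulr0 addr0.
Qed.

Lemma KKT_y_unique {y mu nu y' mu' nu'} : strict_complementarity F ->
  KKT F x y mu nu -> KKT F x y' mu' nu' -> y' = y.
Proof.
move=> hsc K K'; case: (KKT_multipliers_unique K K') => mu_eq nu_eq.
rewrite -{}mu_eq -{}nu_eq in K'.
apply/eqP; apply: contraT => y'_neq.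
have [[y_ge0 sum1] [y'_ge0 sum1']] := (KKT_in_simplex K, KKT_in_simplex K').
have sum_eq : \sum_i y 0 i = \sum_i y' 0 i by rewrite sum1 sum1'.
have y'_neq_at : exists i, y' 0 i != y 0 i.
  apply/existsP; move: y'_neq; apply: contraLR => /existsPn eq_at.
  by apply/negPn/eqP/rowP => i; apply/eqP/negPn/eq_at.
have [t [z_ge0 [i yi_gt0 zi0]]] := min_ratio_test y_ge0 y'_ge0 sum_eq y'_neq_at.
have := hsc _ _ _ _ (KKT_line t K K' z_ge0) i; rewrite !mxE zi0 => /(_ erefl).
by rewrite (KKT_nu_eq0 i K yi_gt0) ltxx.
Qed.

End KKT.

Theorem corollary1 (R : realType) (n m : nat) (F : 'rV[R]_n -> 'rV[R]_m)
  (hF : smooth F) (hsc : strict_complementarity F) (xs : 'rV[R]_n) :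
  (exists y, stationary F xs y) ->
  exists y : 'rV[R]_m,
    (in_simplex y /\ stationary F xs y) /\
    (forall y' : 'rV[R]_m, in_simplex y' /\ stationary F xs y' -> y' = y) /\
    (exists! p : R * 'rV[R]_m, KKT F xs y p.1 p.2).
Proof.
move=> [y [mu [nu K]]]; exists y; split; [|split].
- by split; [exact: KKT_in_simplex K | exists mu, nu].
- by move=> y' [_ [mu' [nu' K']]]; exact: KKT_y_unique hsc K K'.
- exists (mu, nu); split=> // [[mu' nu']] /= K'.
  exact: KKT_multipliers_unique K K'.
Qed.
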